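(* Let $a_0,a_1\in\mathbb{C}$ with $a_1\neq0$ such that the polynomial $f(x)=a_0+a_1x$ has no positive integer root, and let $\Lambda=a_0D+a_1DxD$. Then the monic polynomial sequences that are both $\Lambda$-Appell and orthogonal are exactly the Laguerre sequences with parameter $\alpha=a_0/a_1$, up to an affine transformation.
   Context: $\mathcal{P}$ is the space of complex polynomials, $D$ the derivative, $x$ multiplication by $x$, products are compositions. A monic polynomial sequence (MPS) is $\{B_n\}_{n\ge0}$ with $B_n$ monic of degree $n$. An MPS is $\Lambda$-Appell if $\Lambda B_{n+1}=\rho_nB_n$ for all $n\ge0$, where $\rho_n=(n+1)f(n+1)$. An MPS is orthogonal with respect to a linear functional $u$ on $\mathcal{P}$ if $\langle u,B_nB_m\rangle=0$ for $n\neq m$ and $\langle u,B_n^2\rangle\neq0$. The (monic) Laguerre sequence with parameter $\alpha\notin\mathbb{Z}^-$ is the monic orthogonal sequence whose functional $u$ satisfies $D(xu)+(x-\alpha-1)u=0$, where on functionals $\langle Du,p\rangle=-\langle u,p'\rangle$ and $\langle xu,p\rangle=\langle u,xp\rangle$. An affine transformation of an MPS $\{B_n\}$ is the MPS $\{c^{-n}B_n(cx+d)\}$ for constants $c\neq0$, $d$. *)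

(* Complex numbers are modelled as R[i] = complex R for an
   arbitrary real closed field R (R = the reals gives the usual C). *)
From HB Require Import structures.
From mathcomp Require Import all_boot all_order all_algebra.
From mathcomp Require Import complex.
Set Implicit Arguments. Unset Strict Implicit. Unset Printing Implicit Defensive.
Import Order.TTheory GRing.Theory Num.Theory.
Local Open Scope ring_scope.

Section Defs.
Variable C : fieldType.

Definition MPS (B : nat -> {poly C}) : Prop :=
  forall n, B n \is monic /\ size (B n) = n.+1.

Definition functional (u : {poly C} -> C) : Prop :=
  forall (a : C) (p q : {poly C}), u (a *: p + q) = a * u p + u q.

Definition orthogonal_wrt (B : nat -> {poly C}) (u : {poly C} -> C) : Prop :=
  (forall n m, n != m -> u (B n * B m) = 0) /\ (forall n, u (B n ^+ 2) != 0).

Definition orthogonal_MPS (B : nat -> {poly C}) : Prop :=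
  MPS B /\ exists u, functional u /\ orthogonal_wrt B u.

Definition Lam (a0 a1 : C) (p : {poly C}) : {poly C} :=
  a0 *: p^`() + a1 *: ('X * p^`())^`().

Definition rho (a0 a1 : C) (n : nat) : C := n.+1%:R * (a0 + a1 * n.+1%:R).

Definition Lam_Appell (a0 a1 : C) (B : nat -> {poly C}) : Prop :=
  MPS B /\ forall n, Lam a0 a1 (B n.+1) = rho a0 a1 n *: B n.

(* monic Laguerre sequence with parameter alpha: the monic orthogonal sequence
   whose functional u satisfies D(xu) + (x - alpha - 1) u = 0, i.e.
   for all p, -<u, x p'> + <u, (x - alpha - 1) p> = 0. *)
Definition Laguerre (alpha : C) (L : nat -> {poly C}) : Prop :=
  MPS L /\ exists u, functional u /\ orthogonal_wrt L u /\
    forall p : {poly C}, - u ('X * p^`()) + u (('X - (alpha + 1)%:P) * p) = 0.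

Definition affine (c d : C) (B : nat -> {poly C}) (n : nat) : {poly C} :=
  (c ^+ n)^-1 *: (B n \Po (c *: 'X + d%:P)).

End Defs.

(* If B is Lambda-Appell and orthogonal for u, testing the Appell relation
   against the basis gives u(Lambda p) = k u(B_1 p) and
   u(B_1 Lambda p) = l u(B_2 p); together with the commutation rule
   Lambda((x - b) p) = (x - b) Lambda p + (a0 + a1) p + 2 a1 x p' they yield a
   Pearson equation u(x p') = u(pi p) with deg pi <= 2.  Applying the first
   relation to x p and eliminating the derivatives with the Pearson equation
   produces a polynomial tau annihilated by u, hence tau = 0; its coefficients
   force pi = s x - (alpha + 1) with s != 0, which is the Laguerre equation
   after the dilation x |-> x / s.  Conversely, the Laguerre Pearson equation
   makes Lambda B_(n+1) - rho_n B_n, of degree < n, orthogonal to every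
   polynomial of degree < n, hence zero. *)

From HB Require Import structures.
From mathcomp Require Import all_boot all_order all_algebra.
From mathcomp Require Import complex.
From mathcomp Require Import ring zify.
Import Order.TTheory GRing.Theory Num.Theory.
Local Open Scope ring_scope.
Set Implicit Arguments. Unset Strict Implicit. Unset Printing Implicit Defensive.

Section Functional.
Variables (C : fieldType) (u : {poly C} -> C).
Hypothesis hu : functional u.

Lemma functionalD p q : u (p + q) = u p + u q.
Proof. by have := hu 1 p q; rewrite scale1r mul1r. Qed.

Lemma functional0 : u 0 = 0.
Proof. by apply: (addrI (u 0)); rewrite -functionalD !addr0. Qed.

Lemma functionalZ a p : u (a *: p) = a * u p.
Proof. by have := hu a p 0; rewrite !addr0 functional0 addr0. Qed.

Lemma functionalN p : u (- p) = - u p.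
Proof. by rewrite -scaleN1r functionalZ mulN1r. Qed.

Lemma functionalB p q : u (p - q) = u p - u q.
Proof. by rewrite functionalD functionalN. Qed.

Lemma functional_comp (G : {poly C} -> {poly C}) :
  (forall a p q, G (a *: p + q) = a *: G p + G q) -> functional (fun p => u (G p)).
Proof. by move=> hG a p q; rewrite hG functionalD functionalZ. Qed.

Lemma functional_mul k q : functional (fun p => k * u (q * p)).
Proof. by move=> a p r; rewrite mulrDr -scalerAr functionalD functionalZ; ring. Qed.

End Functional.

Section SizeBounds.
Variable C : fieldType.
Implicit Types p q : {poly C}.

Lemma size_polyD_leq p q n :
  (size p <= n)%N -> (size q <= n)%N -> (size (p + q)%R <= n)%N.
Proof. by move=> hp hq; rewrite (leq_trans (size_polyD _ _)) // geq_max hp. Qed.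

Lemma size_polyB_leq p q n :
  (size p <= n)%N -> (size q <= n)%N -> (size (p - q)%R <= n)%N.
Proof. by move=> hp hq; rewrite size_polyD_leq // size_polyN. Qed.

Lemma size_polyM_leq p q m n :
  (size p <= m.+1)%N -> (size q <= n)%N -> (size (p * q)%R <= m + n)%N.
Proof. by move=> hp hq; have := size_polyMleq p q; lia. Qed.

Lemma size_deriv_leq p n : (size p <= n.+1)%N -> (size p^`() <= n)%N.
Proof.
move=> hp; apply/leq_sizeP => j hj.
by rewrite coef_deriv nth_default ?mul0rn // (leq_trans hp).
Qed.

Lemma size3_polyE p :
  (size p <= 3)%N -> p = p`_2 *: 'X^2 + p`_1 *: 'X + (p`_0)%:P.
Proof.
move=> hp; apply/polyP => -[|[|[|i]]];
  rewrite !coefD !coefZ coefXn coefX coefC ?mulr0 ?mulr1 ?addr0 ?add0r //=.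
by rewrite nth_default // (leq_trans hp).
Qed.

End SizeBounds.

Section MonicBasis.
Variables (C : fieldType) (B : nat -> {poly C}).
Hypothesis hB : MPS B.

Lemma MPS_coef_diag k : (B k)`_k = 1.
Proof. by have [/monicP + hs] := hB k; rewrite /lead_coef hs. Qed.

Lemma MPS_coef_gt k j : (k < j)%N -> (B k)`_j = 0.
Proof. by move=> hkj; have [_ hs] := hB k; rewrite nth_default // hs. Qed.

Lemma MPS0 : B 0 = 1.
Proof.
have [_ hs] := hB 0; rewrite (size1_polyC (eq_leq hs)).
by have := MPS_coef_diag 0 => ->.
Qed.

Lemma MPS1 : B 1 = 'X - (- (B 1)`_0)%:P.
Proof.
have [_ hs] := hB 1; rewrite [LHS](size3_polyE (leqW (eq_leq hs))).
rewrite MPS_coef_gt // MPS_coef_diag.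
by rewrite scale0r add0r scale1r polyCN opprK.
Qed.

Lemma size_sub_MPS k (p : {poly C}) :
  (size p <= k.+1)%N -> (size (p - p`_k *: B k)%R <= k)%N.
Proof.
move=> hp; apply/leq_sizeP => j hj; rewrite coefB coefZ.
case: (ltngtP k j) hj => // [hkj|->] _; last by rewrite MPS_coef_diag mulr1 subrr.
by rewrite MPS_coef_gt // mulr0 subr0 nth_default // (leq_trans hp).
Qed.

Lemma functional_MPS_ext (F G : {poly C} -> C) :
  functional F -> functional G -> (forall k, F (B k) = G (B k)) -> F =1 G.
Proof.
move=> hF hG hFG p; move: {2}(size p) (leqnn (size p)) => n.
elim: n p => [|n IH] p hp.
  by move/size_poly_leq0P: hp => ->; rewrite !functional0.
have -> : p = p`_n *: B n + (p - p`_n *: B n) by rewrite addrC subrK.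
rewrite (functionalD hF) (functionalD hG) (functionalZ hF) (functionalZ hG).
by rewrite hFG IH // size_sub_MPS.
Qed.

Variable u : {poly C} -> C.
Hypotheses (hu : functional u) (ho : orthogonal_wrt B u).

Lemma orthogonal_size_lt n (g : {poly C}) : (size g <= n)%N -> u (B n * g) = 0.
Proof.
move=> hgn; suff hk k : forall g : {poly C},
    (size g <= k)%N -> (k <= n)%N -> u (B n * g) = 0.
  exact: hk (size g) g (leqnn _) hgn.
elim: k {g hgn} => [|k IH] g hg hkn.
  by move/size_poly_leq0P: hg => ->; rewrite mulr0 (functional0 hu).
have -> : g = g`_k *: B k + (g - g`_k *: B k) by rewrite addrC subrK.
rewrite mulrDr (functionalD hu) -scalerAr (functionalZ hu) ho.1 ?mulr0 ?add0r.
  by rewrite IH ?size_sub_MPS // ltnW.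
by rewrite neq_ltn hkn orbT.
Qed.

Lemma orthogonal_moment_gt0 k : (0 < k)%N -> u (B k) = 0.
Proof. by move=> hk; rewrite -[B k]mul1r -MPS0 ho.1 // neq_ltn hk. Qed.

Lemma orthogonal_moment0 : u 1 != 0.
Proof. by have := ho.2 0; rewrite MPS0 expr1n. Qed.

Lemma orthogonal_lead (r : {poly C}) : r != 0 -> u (r * B (size r).-1) != 0.
Proof.
move=> hr; have hs : size r = (size r).-1.+1 by rewrite prednK // size_poly_gt0.
move: (size r).-1 hs => d hs.
have -> : r = r`_d *: B d + (r - r`_d *: B d) by rewrite addrC subrK.
rewrite mulrDl (functionalD hu) [(r - _) * _]mulrC.
rewrite orthogonal_size_lt ?size_sub_MPS ?hs // addr0 -scalerAl (functionalZ hu).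
rewrite mulf_neq0 -?expr2 ?ho.2 //.
by rewrite -lead_coef_eq0 lead_coefE hs in hr.
Qed.

Lemma orthogonal_eq0 n (r : {poly C}) :
  (size r <= n)%N -> (forall g : {poly C}, (size g <= n)%N -> u (r * g) = 0) -> r = 0.
Proof.
move=> hrn hr; apply/eqP/contraT => r_neq0.
have := orthogonal_lead r_neq0; rewrite hr ?eqxx //.
by have [_ ->] := hB (size r).-1; rewrite prednK // size_poly_gt0.
Qed.

End MonicBasis.

Section LambdaOperator.
Variables (C : fieldType) (a0 a1 : C).

Lemma coef_Lam (p : {poly C}) i : (Lam a0 a1 p)`_i = rho a0 a1 i * p`_i.+1.
Proof. by rewrite /Lam /rho coefD !coefZ !coef_deriv coefXM coef_deriv /=; ring. Qed.

Lemma Lam_is_linear a (p q : {poly C}) :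
  Lam a0 a1 (a *: p + q) = a *: Lam a0 a1 p + Lam a0 a1 q.
Proof.
rewrite /Lam !derivD !derivZ mulrDr -scalerAr !derivD !derivZ.
by rewrite !scalerDr !scalerA [a1 * a]mulrC [a0 * a]mulrC -!scalerA addrACA.
Qed.

Lemma Lam_mulXsubC b (p : {poly C}) :
  Lam a0 a1 (('X - b%:P) * p) =
  ('X - b%:P) * Lam a0 a1 p + (a0 + a1) *: p + (2 * a1) *: ('X * p^`()).
Proof. by rewrite /Lam !derivE -!mul_polyC !polyCD !polyCM; ring. Qed.

Lemma Lam1 : Lam a0 a1 1 = 0.
Proof. by rewrite /Lam -polyC1 derivC mulr0 derivC !scaler0 addr0. Qed.

End LambdaOperator.

(* The moment form of the distributional equation D(x u) + pi u = 0. *)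
Definition pearson (C : fieldType) (u : {poly C} -> C) (pi : {poly C}) : Prop :=
  forall p, u ('X * p^`()) = u (pi * p).

Lemma pearsonP (C : fieldType) (u : {poly C} -> C) (pi : {poly C}) :
  functional u ->
  pearson u pi <-> forall p, - u ('X * p^`()) + u (pi * p) = 0.
Proof.
move=> hu; split=> hP p; first by rewrite hP addNr.
by apply/eqP; rewrite -subr_eq0 -opprB oppr_eq0 addrC hP.
Qed.

Lemma pearson_sub (C : fieldType) (u : {poly C} -> C) (pi : {poly C}) :
  functional u -> pearson u pi -> forall h, u ('X * h^`() - pi * h) = 0.
Proof. by move=> hu hP h; rewrite (functionalB hu) hP subrr. Qed.

Section PearsonToAppell.
Variables (C : fieldType) (a0 a1 s : C) (B : nat -> {poly C}) (u : {poly C} -> C).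
Hypotheses (ha1 : a1 != 0) (hB : MPS B) (hu : functional u) (ho : orthogonal_wrt B u).
Hypothesis hP : pearson u (s *: 'X - (a0 / a1 + 1)%:P).

Let l := s *: 'X - (a0 / a1 + 1)%:P.

Lemma pearson_Lam_orthogonal n (g : {poly C}) :
  (size g <= n)%N -> u (Lam a0 a1 (B n.+1) * g) = 0.
Proof.
move=> hg; set y := B n.+1; set k := s *: g - g^`().
(* The Pearson equation kills both brackets; k is chosen so that the last
   term is y times a polynomial of degree at most n. *)
have -> : Lam a0 a1 y * g = a1 *: (('X * (g * y^`())^`() - l * (g * y^`()))
   + ('X * (k * y)^`() - l * (k * y)) + y * (l * k - 'X * k^`())).
  rewrite /l /k /Lam -[in LHS](divfK ha1 a0) [_ / a1]mulrC.
  by rewrite !derivE -!mul_polyC !polyCM !polyCD; ring.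
rewrite (functionalZ hu) (functionalD hu) (functionalD hu) !(pearson_sub hu hP).
rewrite orthogonal_size_lt ?add0r ?mulr0 //.
have size_l : (size l <= 2)%N.
  rewrite size_polyB_leq ?(leq_trans (size_polyC_leq1 _)) //.
  by rewrite (leq_trans (size_scale_leq _ _)) // size_polyX.
have size_k : (size k <= n)%N.
  rewrite size_polyB_leq ?(leq_trans (size_scale_leq _ _)) //.
  by rewrite size_deriv_leq // leqW.
rewrite -add1n size_polyB_leq ?size_polyM_leq ?size_polyX //.
by rewrite size_deriv_leq // leqW.
Qed.

Lemma pearson_Appell n : Lam a0 a1 (B n.+1) = rho a0 a1 n *: B n.
Proof.
apply/eqP; rewrite -subr_eq0; apply/eqP/(orthogonal_eq0 hB hu ho (n := n)) => [|g hg].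
  apply/leq_sizeP => j hj; rewrite coefB coefZ coef_Lam.
  case: (ltngtP n j) hj => // [hnj|<-] _; last by rewrite !MPS_coef_diag // subrr.
  by rewrite !MPS_coef_gt ?mulr0 ?subr0.
rewrite mulrBl (functionalB hu) -scalerAl (functionalZ hu) pearson_Lam_orthogonal //.
by rewrite orthogonal_size_lt // mulr0 subr0.
Qed.

End PearsonToAppell.

Lemma tau_eq0_coefs (C : fieldType) (a0 a1 k beta A b c : C) :
  a1 != 0 ->
  let pi := A *: 'X^2 + b *: 'X + c%:P in
  (a0 + a1)%:P + (a0 + 2 * a1) *: pi + a1 *: pi ^+ 2 - a1 *: ('X * pi^`())
    - k *: ('X * ('X - beta%:P)) = 0 ->
  [/\ A = 0, k = a1 * b ^+ 2 & (a0 + a1) * b + 2 * a1 * b * c + k * beta = 0].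
Proof.
move=> ha1 pi htau.
have tauE : (a1 * A ^+ 2)%:P * 'X^4 + (2 * a1 * A * b)%:P * 'X^3
   + (a0 * A + a1 * (b ^+ 2 + 2 * A * c) - k)%:P * 'X^2
   + ((a0 + a1) * b + 2 * a1 * b * c + k * beta)%:P * 'X
   + ((a0 + a1) + (a0 + 2 * a1) * c + a1 * c ^+ 2)%:P = 0.
  by rewrite -[RHS]htau /pi !derivE -!mul_polyC !polyCD !polyCM !polyCN; ring.
have coef_tau i := congr1 (fun q : {poly C} => q`_i) tauE.
have := coef_tau 4%N; have := coef_tau 2%N; have := coef_tau 1%N.
rewrite !coefD !coefCM !coefXn !coefX !coefC /= !mulr0 !addr0 !add0r !mulr1.
move=> hX hX2 /eqP; rewrite mulf_eq0 (negbTE ha1) expf_eq0 /= => /eqP hA.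
split=> //.
by apply/eqP; rewrite eq_sym -subr_eq0 -hX2 hA; apply/eqP; ring.
Qed.

Section PearsonShape.
Variables (C : fieldType) (a0 a1 k beta : C) (u : {poly C} -> C) (pi : {poly C}).
Hypotheses (ha1 : a1 != 0) (hk : k != 0) (hu : functional u) (hu1 : u 1 != 0).
Hypothesis huB : u ('X - beta%:P) = 0.
Hypothesis hnd : forall r : {poly C}, (forall p, u (r * p) = 0) -> r = 0.
Hypothesis hLam : forall p, u (Lam a0 a1 p) = k * u (('X - beta%:P) * p).
Hypotheses (hP : pearson u pi) (size_pi : (size pi <= 3)%N).

Lemma pearson_tau : (a0 + a1)%:P + (a0 + 2 * a1) *: pi + a1 *: pi ^+ 2
  - a1 *: ('X * pi^`()) - k *: ('X * ('X - beta%:P)) = 0.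
Proof.
apply: hnd => p.
have -> : ((a0 + a1)%:P + (a0 + 2 * a1) *: pi + a1 *: pi ^+ 2
     - a1 *: ('X * pi^`()) - k *: ('X * ('X - beta%:P))) * p =
   Lam a0 a1 ('X * p) - k *: (('X - beta%:P) * ('X * p))
     - a1 *: ('X * ('X * p^`())^`() - pi * ('X * p^`()))
     - a1 *: ('X * (pi * p)^`() - pi * (pi * p))
     - (a0 + 2 * a1) *: ('X * p^`() - pi * p).
  by rewrite /Lam !derivE -!mul_polyC !polyCD !polyCM; ring.
rewrite !(functionalB hu) !(functionalZ hu) hLam !(pearson_sub hu hP).
by rewrite subrr !mulr0 !subr0.
Qed.

Lemma pearson_shape : exists2 s, s != 0 & pi = s *: 'X - (a0 / a1 + 1)%:P.
Proof.
have pi_def := size3_polyE size_pi.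
move: (pi`_2) (pi`_1) (pi`_0) pi_def => A b c pi_def.
have := pearson_tau; rewrite pi_def => /(tau_eq0_coefs ha1) [hA hkb hX].
have hb : b != 0 by apply: contraNneq hk => b0; rewrite hkb b0 expr0n mulr0.
have uX : u 'X = beta * u 1.
  by apply/eqP; rewrite -subr_eq0 -(functionalZ hu) -(functionalB hu) alg_polyC huB.
have hbc : b * beta + c = 0.
  have := hP 1; rewrite mulr1 -polyC1 derivC mulr0 (functional0 hu) pi_def hA -alg_polyC.
  rewrite !(functionalD hu) !(functionalZ hu) uX => h.
  have : (b * beta + c) * u 1 = 0 by rewrite [RHS]h; ring.
  by move/eqP; rewrite mulf_eq0 (negbTE hu1) orbF => /eqP.
have : b * (a1 * c + a1 + a0) =
    ((a0 + a1) * b + 2 * a1 * b * c + k * beta) - a1 * b * (b * beta + c).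
  by rewrite hkb; ring.
rewrite hX hbc mulr0 subr0 => /eqP; rewrite mulf_eq0 (negbTE hb) /= => /eqP hc.
exists b => //; rewrite hA scale0r add0r.
have -> : c = (a1 * c + a1 + a0) / a1 - (a0 / a1 + 1) by field.
by rewrite hc mul0r sub0r polyCN.
Qed.

End PearsonShape.

Section AppellToPearson.
Variables (C : numFieldType) (a0 a1 : C) (B : nat -> {poly C}) (u : {poly C} -> C).
Hypotheses (ha1 : a1 != 0) (hf1 : a0 + a1 != 0) (hB : MPS B).
Hypothesis hAp : forall n, Lam a0 a1 (B n.+1) = rho a0 a1 n *: B n.
Hypotheses (hu : functional u) (ho : orthogonal_wrt B u).

Lemma Appell_moment_Lam :
  exists2 k, k != 0 & forall p, u (Lam a0 a1 p) = k * u (B 1 * p).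
Proof.
exists (rho a0 a1 0 * u 1 / u (B 1 ^+ 2)).
  have rho0 : rho a0 a1 0 != 0 by rewrite /rho mul1r mulr1.
  by rewrite mulf_neq0 ?invr_eq0 ?ho.2 // mulf_neq0 // (orthogonal_moment0 hB ho).
apply: (functional_MPS_ext hB (functional_comp hu (Lam_is_linear a0 a1))
  (functional_mul hu _ _)) => -[|[|j]] /=.
- by rewrite MPS0 // Lam1 (functional0 hu) mulr1 (orthogonal_moment_gt0 hB) ?mulr0.
- by rewrite hAp (functionalZ hu) MPS0 // -expr2 divfK ?ho.2.
- by rewrite hAp (functionalZ hu) (orthogonal_moment_gt0 hB) // ho.1 // !mulr0.
Qed.

Lemma Appell_moment_B1_Lam :
  exists l, forall p, u (B 1 * Lam a0 a1 p) = l * u (B 2 * p).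
Proof.
exists (rho a0 a1 1 * u (B 1 ^+ 2) / u (B 2 ^+ 2)).
apply: (functional_MPS_ext hB (functional_comp hu _) (functional_mul hu _ _)).
  by move=> a p q; rewrite Lam_is_linear mulrDr scalerAr.
case=> [|[|[|j]]] /=.
- by rewrite MPS0 // Lam1 mulr0 (functional0 hu) mulr1 (orthogonal_moment_gt0 hB) ?mulr0.
- rewrite hAp -scalerAr (functionalZ hu) MPS0 // mulr1.
  by rewrite (orthogonal_moment_gt0 hB) // ho.1 // !mulr0.
- by rewrite hAp -scalerAr (functionalZ hu) -expr2 divfK ?ho.2.
- by rewrite hAp -scalerAr (functionalZ hu) (ho.1 1) // (ho.1 2 j.+3) // !mulr0.
Qed.

Lemma Appell_pearson : exists2 pi : {poly C}, (size pi <= 3)%N & pearson u pi.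
Proof.
have [k _ hk] := Appell_moment_Lam; have [l hl] := Appell_moment_B1_Lam.
have B1_def := MPS1 hB.
have [[_ size_B1] [_ size_B2]] := (hB 1, hB 2).
exists ((2 * a1)^-1 *: (k *: B 1 ^+ 2 - l *: B 2 - (a0 + a1)%:P)) => [|p].
  rewrite (leq_trans (size_scale_leq _ _)) // !size_polyB_leq //.
  - by rewrite (leq_trans (size_scale_leq _ _)) // (@size_polyM_leq _ _ _ 1 2) ?size_B1.
  - by rewrite (leq_trans (size_scale_leq _ _)) // size_B2.
  - exact: leq_trans (size_polyC_leq1 _) _.
have := hk (B 1 * p); rewrite {1}B1_def Lam_mulXsubC -B1_def.
rewrite !(functionalD hu) !(functionalZ hu) hl => E.
rewrite -scalerAl (functionalZ hu) !mulrBl !(functionalB hu) -!scalerAl !(functionalZ hu).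
rewrite mul_polyC (functionalZ hu) expr2 -mulrA -E.
by field.
Qed.

Lemma Appell_pearson_Laguerre :
  exists2 s, s != 0 & pearson u (s *: 'X - (a0 / a1 + 1)%:P).
Proof.
have [k hk hLam] := Appell_moment_Lam; have [pi size_pi hP] := Appell_pearson.
rewrite (MPS1 hB) in hLam.
have huB : u ('X - (- (B 1)`_0)%:P) = 0.
  by rewrite -(MPS1 hB) (orthogonal_moment_gt0 hB ho).
have hnd r : (forall p, u (r * p) = 0) -> r = 0.
  by move=> hr; apply: (orthogonal_eq0 hB hu ho (leqnn (size r))) => g _.
have hu1 := orthogonal_moment0 hB ho.
have [s hs pi_def] := pearson_shape ha1 hk hu hu1 huB hnd hLam hP size_pi.
by exists s => //; rewrite -pi_def.
Qed.

End AppellToPearson.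

Section Dilation.
Variables (C : fieldType) (c : C).
Hypothesis hc : c != 0.

Lemma affine_MPS B : MPS B -> MPS (affine c 0 B).
Proof.
move=> hB n; have [/monicP lcB sizeB] := hB n.
have size_cX : size (c *: 'X + 0%:P : {poly C}) = 2.
  by rewrite addr0 size_scale ?size_polyX.
have lc : lead_coef (B n \Po (c *: 'X + 0%:P)) = c ^+ n.
  by rewrite lead_coef_comp ?size_cX // addr0 lead_coefZ lead_coefX mulr1 sizeB lcB mul1r.
have cn_neq0 : c ^+ n != 0 by rewrite expf_neq0.
split; first by apply/monicP; rewrite /affine lead_coefZ lc mulVf.
rewrite /affine size_scale ?invr_neq0 // size_comp_poly2 //.
Qed.

Lemma affine_comp B n : affine c 0 B n \Po (c^-1 *: 'X) = (c ^+ n)^-1 *: B n.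
Proof.
rewrite /affine comp_polyZ -comp_polyA comp_polyD comp_polyZ comp_polyX comp_polyC.
by rewrite addr0 scalerA divff // scale1r comp_polyXr.
Qed.

Lemma affineK B : affine c 0 (affine c^-1 0 B) =1 B.
Proof.
move=> n; rewrite /affine comp_polyZ -comp_polyA comp_polyD comp_polyZ comp_polyX.
rewrite comp_polyC polyC0 !addr0 !scalerA mulVf // scale1r comp_polyXr exprVn invrK.
by rewrite mulVf ?scale1r ?expf_neq0.
Qed.

Variable u : {poly C} -> C.
Hypothesis hu : functional u.

Let v p := u (p \Po (c^-1 *: 'X)).

Lemma functional_dilate : functional v.
Proof. by apply: functional_comp => // a p q; rewrite comp_polyD comp_polyZ. Qed.

Lemma orthogonal_affine B : orthogonal_wrt B u -> orthogonal_wrt (affine c 0 B) v.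
Proof.
move=> [ho1 ho2]; split=> [n m hnm|n]; rewrite /v ?expr2 comp_polyM !affine_comp.
  by rewrite -scalerAl -scalerAr !(functionalZ hu) ho1 // !mulr0.
rewrite -scalerAl -scalerAr !(functionalZ hu) -expr2.
by rewrite !mulf_neq0 // invr_neq0 // expf_neq0.
Qed.

Lemma pearson_dilate s k :
  pearson u (s *: 'X - k%:P) -> pearson v ((s * c) *: 'X - k%:P).
Proof.
move=> hP p; rewrite /v !comp_polyM comp_polyB comp_polyZ !comp_polyX comp_polyC.
rewrite scalerA mulfK // -hP deriv_comp derivZ derivX.
by rewrite -!mul_polyC; congr u; ring.
Qed.

End Dilation.

Theorem proposition8 (R : rcfType) (a0 a1 : R[i]) :
  a1 != 0 ->
  (forall n : nat, (0 < n)%N -> a0 + a1 * n%:R != 0) ->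
  forall B : nat -> {poly R[i]},
    (Lam_Appell a0 a1 B /\ orthogonal_MPS B) <->
    (exists (L : nat -> {poly R[i]}) (c : R[i]),
        Laguerre (a0 / a1) L /\ c != 0 /\ forall n, B n = affine c 0 L n).
Proof.
move=> ha1 hf B; split.
  move=> [[hB hAp] [_ [u [hu ho]]]].
  (* Of the hypothesis on f only f(1) != 0, i.e. rho_0 != 0, is needed. *)
  have hf1 : a0 + a1 != 0 by have := hf 1%N isT; rewrite mulr1.
  have [s hs hP] := Appell_pearson_Laguerre ha1 hf1 hB hAp hu ho.
  have hs' : s^-1 != 0 by rewrite invr_eq0.
  exists (affine s^-1 0 B), s; split; last by split=> // n; rewrite affineK.
  split; first exact: affine_MPS.
  exists (fun p => u (p \Po (s^-1^-1 *: 'X))).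
  split; first exact: functional_dilate.
  split; first exact: orthogonal_affine.
  apply/(pearsonP _ (functional_dilate _ hu)).
  by have := pearson_dilate hs' hP; rewrite mulfV // scale1r.
move=> [L [c [[hL [u [hu [ho hP]]]] [hc hBL]]]].
have hv := functional_dilate c hu.
have hMB : MPS B by move=> n; rewrite hBL; exact: affine_MPS.
have hoB : orthogonal_wrt B (fun p => u (p \Po (c^-1 *: 'X))).
  by have [ho1 ho2] := orthogonal_affine hc hu ho; split=> *; rewrite !hBL; auto.
split; last by split=> //; exists (fun p => u (p \Po (c^-1 *: 'X))).
split=> // n; rewrite !hBL.
apply: (pearson_Appell ha1 (affine_MPS hc hL) hv (orthogonal_affine hc hu ho)).
have := pearson_dilate hc (s := 1); rewrite mul1r scale1r; apply.
exact/(pearsonP _ hu).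
Qed.
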